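(* Let $T \in \mathscr{B}(\mathscr{H})$ be a natural left invertible operator, let $P = I - TT^\dagger$, and set \[ \mathscr{K}_T := \overline{\operatorname{span}}\{T^n P (T^\dagger)^m : n, m \ge 0\}. \] Then $\mathscr{K}_T = \mathscr{C}$, the commutator ideal of $\mathfrak{A}_T$.
   Context: For a left invertible $T$, $T^\dagger = (T^*T)^{-1}T^*$ is its Moore–Penrose inverse, and $\mathfrak{A}_T$ is the norm-closed algebra generated by $T$ and $T^\dagger$. The commutator ideal of $\mathfrak{A}_T$ is the closed two-sided ideal generated by all commutators in $\mathfrak{A}_T$. A left invertible $T$ is natural if $0 < \dim\ker(T^* ) < \infty$. *)

From mathcomp Require Import all_boot all_algebra.
From mathcomp Require Import all_classical all_reals.
From mathcomp.real_closed Require Import complex.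
Set Implicit Arguments. Unset Strict Implicit. Unset Printing Implicit Defensive.
Import GRing.Theory Num.Theory.
Local Open Scope ring_scope.

Section Hilbert.
Variable R : realType.
Local Notation C := R[i].
Variable H : lmodType C.
Variable ip : H -> H -> C.   (* inner product, linear in the first argument *)

Definition hnorm (x : H) : C := sqrtC (ip x x).

Definition is_hilbert : Prop :=
  [/\ (forall (a : C) (x y z : H), ip (a *: x + y) z = a * ip x z + ip y z),
      (forall x y, ip y x = (ip x y)^*),
      (forall x, 0 <= ip x x),
      (forall x, ip x x = 0 -> x = 0) &
      (forall u : nat -> H,
         (forall e : C, 0 < e -> exists N, forall m n, (N <= m)%N -> (N <= n)%N ->
             hnorm (u m - u n) <= e) ->
         exists l : H, forall e : C, 0 < e -> exists N, forall n, (N <= n)%N ->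
             hnorm (u n - l) <= e)].

Definition op := H -> H.
Definition lin_op (A : op) : Prop :=
  forall (a : C) (x y : H), A (a *: x + y) = a *: A x + A y.
Definition bdd (A : op) : Prop :=
  lin_op A /\ exists M : C, forall x, hnorm (A x) <= M * hnorm x.
Definition is_adjoint (A S : op) : Prop := forall x y, ip (A x) y = ip x (S y).

Definition op0 : op := fun _ => 0.
Definition op_id : op := fun x => x.
Definition op_add (A B : op) : op := fun x => A x + B x.
Definition op_sub (A B : op) : op := fun x => A x - B x.
Definition op_scale (a : C) (A : op) : op := fun x => a *: A x.
Definition op_comp (A B : op) : op := fun x => A (B x).

Definition opset := op -> Prop.

Definition norm_closed (S : opset) : Prop :=
  forall A, bdd A ->
    (forall e : C, 0 < e -> exists B, S B /\ forall x, hnorm (A x - B x) <= e * hnorm x) ->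
    S A.
Definition subspace (S : opset) : Prop :=
  [/\ (forall A, S A -> bdd A), S op0 &
      (forall (a : C) A B, S A -> S B -> S (op_add (op_scale a A) B))].
Definition subalgebra (S : opset) : Prop :=
  subspace S /\ (forall A B, S A -> S B -> S (op_comp A B)).

Definition closed_alg_gen (G : opset) : opset := fun A =>
  forall S, subalgebra S -> norm_closed S -> (forall B, G B -> S B) -> S A.
Definition closed_span (G : opset) : opset := fun A =>
  forall S, subspace S -> norm_closed S -> (forall B, G B -> S B) -> S A.
Definition ideal_of (Alg J : opset) : Prop :=
  [/\ subspace J, (forall A, J A -> Alg A) &
      (forall A B, Alg A -> J B -> J (op_comp A B) /\ J (op_comp B A))].
Definition commutator_ideal (Alg : opset) : opset := fun A =>
  forall J, ideal_of Alg J -> norm_closed J ->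
    (forall X Y, Alg X -> Alg Y -> J (op_sub (op_comp X Y) (op_comp Y X))) -> J A.

Definition left_invertible (T : op) : Prop :=
  bdd T /\ exists L, bdd L /\ op_comp L T = op_id.

Definition moore_penrose (T Ts Td : op) : Prop :=
  exists B, [/\ bdd B, op_comp B (op_comp Ts T) = op_id,
                op_comp (op_comp Ts T) B = op_id & Td = op_comp B Ts].

Definition kernel_fin_pos (Ts : op) : Prop :=
  (exists x : H, x != 0 /\ Ts x = 0) /\
  (exists (n : nat) (e : 'I_n -> H), forall x,
      Ts x = 0 <-> exists c : 'I_n -> C, x = \sum_(i < n) c i *: e i).

Definition natural (T Ts : op) : Prop := left_invertible T /\ kernel_fin_pos Ts.

Definition op_pow (A : op) (n : nat) : op := fun x => iter n A x.

End Hilbert.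

Arguments op0 {R H}.
Arguments op_id {R H}.

From mathcomp Require Import all_boot all_algebra.
From mathcomp Require Import all_classical all_reals.
From mathcomp.real_closed Require Import complex.
From mathcomp Require Import order ring.
Set Implicit Arguments. Unset Strict Implicit. Unset Printing Implicit Defensive.
Import Order.TTheory GRing.Theory Num.Theory.
Local Open Scope ring_scope.

(* Since Td T = I, the projection P = I - T Td is the commutator [Td, T]; so every closed
   ideal of the algebra generated by T and Td that contains all commutators contains each
   T^n P Td^m, hence their closed span K.  Conversely Td P = 0 and P T = 0, so multiplying
   T^n P Td^m by T or Td on either side gives another generator or 0: K is invariant under
   T and Td, hence (by continuity of multiplication) a closed ideal of the algebra.  It
   contains [T, Td] = -P, and the Leibniz rule [X Y, Z] = X [Y, Z] + [X, Z] Y carries this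
   from the generators to all commutators. *)

Section Hilbert.
Variable R : realType.
Local Notation C := R[i].
Variable H : lmodType C.
Variable ip : H -> H -> C.
Hypothesis hH : is_hilbert ip.

Lemma ipDZl a x y z : ip (a *: x + y) z = a * ip x z + ip y z.
Proof. by case: hH. Qed.

Lemma ipC x y : ip y x = (ip x y)^*.
Proof. by case: hH. Qed.

Lemma ip_ge0 x : 0 <= ip x x.
Proof. by case: hH. Qed.

Lemma ip_eq0 x : ip x x = 0 -> x = 0.
Proof. by case: hH => _ _ _ + _; apply. Qed.

Lemma ipDl x y z : ip (x + y) z = ip x z + ip y z.
Proof. by rewrite -[x]scale1r ipDZl mul1r scale1r. Qed.

Lemma ip0l z : ip 0 z = 0.
Proof. by apply: (@addrI _ (ip 0 z)); rewrite addr0 -ipDl addr0. Qed.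

Lemma ipZl a x z : ip (a *: x) z = a * ip x z.
Proof. by rewrite -[a *: x]addr0 ipDZl ip0l addr0. Qed.

Lemma ipBl x y z : ip (x - y) z = ip x z - ip y z.
Proof. by rewrite ipDl -scaleN1r ipZl mulN1r. Qed.

Lemma ipDr x y z : ip z (x + y) = ip z x + ip z y.
Proof. by rewrite ipC ipDl rmorphD /= -!ipC. Qed.

Lemma ipZr a x z : ip z (a *: x) = a^* * ip z x.
Proof. by rewrite ipC ipZl rmorphM /= -ipC. Qed.

Lemma ipBr x y z : ip z (x - y) = ip z x - ip z y.
Proof. by rewrite ipC ipBl rmorphB /= -!ipC. Qed.

Lemma ip_CauchySchwarz x y : ip x y * (ip x y)^* <= ip x x * ip y y.
Proof.
set s := ip x y; set b := ip y y.
have [/ip_eq0 y0|b_neq0] := eqVneq b 0.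
  by rewrite /s /b y0 ipC !ip0l !conjC0 mul0r mulr0.
have b_gt0 : 0 < b by rewrite lt0r b_neq0 ip_ge0.
have := ip_ge0 (b *: x - s *: y).
rewrite ipBl !ipBr !ipZl !ipZr -/s -/b (ipC x y) -/s -ipC -/b.
have -> : b * (b * ip x x) - b * (s^* * s) - (s * (b * s^*) - s * (s^* * b)) =
  b * (b * ip x x - s * s^*) by ring.
by rewrite pmulr_rge0 // subr_ge0 [ip x x * b]mulrC.
Qed.

Local Notation nrm := (hnorm ip).

Lemma hnorm_ge0 x : 0 <= nrm x.
Proof. by rewrite sqrtC_ge0 ip_ge0. Qed.

Lemma hnorm_sqr x : nrm x ^+ 2 = ip x x.
Proof. exact: sqrtCK. Qed.

Lemma hnorm_le x u : 0 <= u -> (nrm x <= u) = (ip x x <= u ^+ 2).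
Proof.
by move=> u_ge0; rewrite -{1}(sqrCK u_ge0) ler_sqrtC // qualifE /= ?ip_ge0 ?exprn_ge0.
Qed.

Lemma hnormZ a x : nrm (a *: x) = `|a| * nrm x.
Proof.
rewrite /hnorm ipZl ipZr mulrA -normCK sqrtCM ?qualifE /= ?exprn_ge0 ?ip_ge0 //.
by rewrite sqrCK.
Qed.

Lemma hnormN x : nrm (- x) = nrm x.
Proof. by rewrite -scaleN1r hnormZ normrN normr1 mul1r. Qed.

Lemma hnormD x y : nrm (x + y) <= nrm x + nrm y.
Proof.
rewrite hnorm_le ?addr_ge0 ?hnorm_ge0 // ipDl !ipDr (ipC x y) sqrrD !hnorm_sqr.
set s := ip x y.
have norm_s : `|s| <= nrm x * nrm y.
  rewrite -ler_sqr ?qualifE /= ?mulr_ge0 ?hnorm_ge0 //.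
  by rewrite exprMn !hnorm_sqr normCK ip_CauchySchwarz.
have re_s : s + s^* <= nrm x * nrm y *+ 2.
  apply: le_trans (real_ler_norm _) _; first by rewrite CrealE rmorphD /= conjCK addrC.
  by apply: le_trans (ler_normD _ _) _; rewrite norm_conjC mulr2n lerD.
have -> : ip x x + s + (s^* + ip y y) = ip x x + ip y y + (s + s^*) by ring.
by rewrite [leRHS]addrAC lerD2l.
Qed.

Lemma hnormB x y : nrm (x - y) <= nrm x + nrm y.
Proof. by rewrite -(hnormN y) hnormD. Qed.

Section LinearOperator.
Variable A : op H.
Hypothesis linA : lin_op A.

Lemma lin_opD x y : A (x + y) = A x + A y.
Proof. by rewrite -{1}[x]scale1r linA scale1r. Qed.

Lemma lin_op0 : A 0 = 0.
Proof. by apply: (@addrI _ (A 0)); rewrite addr0 -lin_opD addr0. Qed.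

Lemma lin_opZ a x : A (a *: x) = a *: A x.
Proof. by rewrite -[a *: x]addr0 linA lin_op0 addr0. Qed.

Lemma lin_opB x y : A (x - y) = A x - A y.
Proof. by rewrite lin_opD -scaleN1r lin_opZ scaleN1r. Qed.

End LinearOperator.

Lemma bdd_lin A : bdd ip A -> lin_op A.
Proof. by case. Qed.

Lemma bdd_bound A : bdd ip A -> exists2 M, 0 < M & forall x, nrm (A x) <= M * nrm x.
Proof.
case=> _ [M leAM]; exists (`|M| + 1) => [|x]; first by rewrite ltr_wpDl.
have Mx_ge0 : 0 <= M * nrm x := le_trans (hnorm_ge0 _) (leAM x).
apply: le_trans (leAM x) _; rewrite -[leLHS]ger0_norm // normrM.
by rewrite [`|nrm x|]ger0_norm ?hnorm_ge0 // ler_wpM2r ?hnorm_ge0 // lerDl.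
Qed.

Lemma bdd0 : bdd ip op0.
Proof.
split; first by move=> a x y; rewrite /op0 scaler0 addr0.
by exists 0 => x; rewrite mul0r /hnorm ip0l sqrtC0.
Qed.

Lemma bdd_id : bdd ip op_id.
Proof. by split => //; exists 1 => x; rewrite mul1r. Qed.

Lemma bdd_comp A B : bdd ip A -> bdd ip B -> bdd ip (op_comp A B).
Proof.
move=> bA bB; split=> [a x y|]; first by rewrite /op_comp (bdd_lin bB) (bdd_lin bA).
have [[M M_gt0 leAM] [N _ leBN]] := (bdd_bound bA, bdd_bound bB).
by exists (M * N) => x; apply: le_trans (leAM _) _; rewrite -mulrA ler_pM2l.
Qed.

Lemma bdd_comb a A B : bdd ip A -> bdd ip B -> bdd ip (op_add (op_scale a A) B).
Proof.
move=> bA bB; split=> [b x y|].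
  rewrite /op_add /op_scale (bdd_lin bB) (bdd_lin bA).
  by rewrite !scalerDr !scalerA [a * b]mulrC addrACA.
have [[M _ leAM] [N _ leBN]] := (bdd_bound bA, bdd_bound bB).
exists (`|a| * M + N) => x; apply: le_trans (hnormD _ _) _.
by rewrite hnormZ mulrDl lerD // -mulrA ler_wpM2l.
Qed.

Lemma bdd_pow A n : bdd ip A -> bdd ip (op_pow A n).
Proof. by move=> bA; elim: n => [|n]; [exact: bdd_id | exact: bdd_comp]. Qed.

Local Notation op_comb a A B := (op_add (op_scale a A) B).

Lemma op_subE (A B : op H) : op_sub A B = op_comb (-1) B A.
Proof. by apply: funext => x; rewrite /op_sub /op_add /op_scale scaleN1r addrC. Qed.

Lemma bdd_sub A B : bdd ip A -> bdd ip B -> bdd ip (op_sub A B).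
Proof. by move=> bA bB; rewrite op_subE; apply: bdd_comb. Qed.

Definition approx (A B : op H) (e : C) : Prop :=
  forall x, nrm (A x - B x) <= e * nrm x.

Definition lipschitz_linear (F : op H -> op H) : Prop :=
  [/\ forall A, bdd ip A -> bdd ip (F A), F op0 = op0,
      forall a A B, F (op_comb a A B) = op_comb a (F A) (F B) &
      exists2 c, 0 < c & forall A B e, 0 < e -> approx A B e -> approx (F A) (F B) (c * e)].

Lemma lipschitz_linear_compl X : bdd ip X -> lipschitz_linear (op_comp X).
Proof.
move=> bX; have [M M_gt0 leXM] := bdd_bound bX; have linX := bdd_lin bX.
split=> [A|||]; first exact: bdd_comp.
- by apply: funext => x; apply: lin_op0.
- by move=> a A B; apply: funext => x; apply: linX.
exists M => // A B e _ leAB x; rewrite /op_comp -lin_opB //.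
by apply: le_trans (leXM _) _; rewrite -mulrA ler_pM2l.
Qed.

Lemma lipschitz_linear_compr X : bdd ip X -> lipschitz_linear (fun A => op_comp A X).
Proof.
move=> bX; have [M M_gt0 leXM] := bdd_bound bX.
split=> // [A bA|]; first exact: bdd_comp.
exists M => // A B e e_gt0 leAB x; apply: le_trans (leAB _) _.
by rewrite [M * e]mulrC -mulrA ler_pM2l.
Qed.

Lemma lipschitz_linear_sub F G : lipschitz_linear F -> lipschitz_linear G ->
  lipschitz_linear (fun A => op_sub (F A) (G A)).
Proof.
case=> bF F0 FD [c1 c1_gt0 lipF] [bG G0 GD [c2 c2_gt0 lipG]].
split=> [A bA|||]; first by apply: bdd_sub; [apply: bF | apply: bG].
- by rewrite F0 G0; apply: funext => x; apply: subrr.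
- move=> a A B; rewrite FD GD; apply: funext => x.
  by rewrite /op_sub /op_add /op_scale scalerBr opprD addrACA.
exists (c1 + c2) => [|A B e e_gt0 leAB x]; first exact: addr_gt0.
have -> : forall u v w z : H, u - v - (w - z) = u - w - (v - z).
  by move=> u v w z; rewrite !opprD !opprK addrACA.
by apply: le_trans (hnormB _ _) _; rewrite !mulrDl lerD ?lipF ?lipG.
Qed.

Definition op_comm (X Y : op H) : op H := op_sub (op_comp X Y) (op_comp Y X).

Lemma lipschitz_linear_comml X : bdd ip X -> lipschitz_linear (op_comm X).
Proof.
by move=> bX; apply: lipschitz_linear_sub;
  [exact: lipschitz_linear_compl | exact: lipschitz_linear_compr].
Qed.

Lemma lipschitz_linear_commr Y : bdd ip Y -> lipschitz_linear (fun X => op_comm X Y).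
Proof.
by move=> bY; apply: lipschitz_linear_sub;
  [exact: lipschitz_linear_compr | exact: lipschitz_linear_compl].
Qed.

Lemma op_commxx X : op_comm X X = op0.
Proof. by apply: funext => x; apply: subrr. Qed.

Lemma op_commN X Y : op_comm X Y = op_scale (-1) (op_comm Y X).
Proof. by apply: funext => x; rewrite /op_scale scaleN1r opprB. Qed.

Lemma op_comm_compl X1 X2 Y : lin_op X1 ->
  op_comm (op_comp X1 X2) Y = op_add (op_comp X1 (op_comm X2 Y)) (op_comp (op_comm X1 Y) X2).
Proof.
move=> linX1; apply: funext => x.
by rewrite /op_add /op_comp /op_comm /op_sub (lin_opB linX1) addrA subrK.
Qed.

Lemma op_comm_compr X Y1 Y2 : lin_op Y1 ->
  op_comm X (op_comp Y1 Y2) = op_add (op_comp (op_comm X Y1) Y2) (op_comp Y1 (op_comm X Y2)).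
Proof.
move=> linY1; apply: funext => x.
by rewrite /op_add /op_comp /op_comm /op_sub (lin_opB linY1) addrA subrK.
Qed.

Section Subspace.
Variable S : opset H.
Hypothesis subS : subspace ip S.

Lemma subspace_bdd A : S A -> bdd ip A.
Proof. by case: subS => + _ _; apply. Qed.

Lemma subspace0 : S op0.
Proof. by case: subS. Qed.

Lemma subspace_comb a A B : S A -> S B -> S (op_comb a A B).
Proof. by case: subS => _ _; apply. Qed.

Lemma subspace_add A B : S A -> S B -> S (op_add A B).
Proof.
move=> SA SB; have := subspace_comb 1 SA SB.
by congr S; apply: funext => x; rewrite /op_add /op_scale scale1r.
Qed.

Lemma subspace_scale a A : S A -> S (op_scale a A).
Proof.
move=> SA; have := subspace_comb a SA subspace0.
by congr S; apply: funext => x; rewrite /op_add /op0 addr0.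
Qed.

Lemma subspace_sub A B : S A -> S B -> S (op_sub A B).
Proof. by move=> SA SB; rewrite op_subE; apply: subspace_comb. Qed.

End Subspace.

Lemma subalgebra_bdd : subalgebra ip (bdd ip).
Proof.
split; first by split=> // [|a A B]; [exact: bdd0 | exact: bdd_comb].
by move=> A B; exact: bdd_comp.
Qed.

Lemma norm_closed_bdd : norm_closed ip (bdd ip).
Proof. by []. Qed.

Lemma subalgebra_ideal S : subalgebra ip S -> ideal_of ip S S.
Proof. by case=> subS SM; split=> // A B SA SB; split; apply: SM. Qed.

Definition preimages (S0 : opset H) (I : Type) (P : I -> Prop)
    (F : I -> op H -> op H) (S : opset H) : opset H :=
  fun A => S0 A /\ forall i, P i -> S (F i A).

Section Preimages.
Variables (S0 S : opset H) (I : Type) (P : I -> Prop) (F : I -> op H -> op H).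
Hypothesis linF : forall i, P i -> lipschitz_linear (F i).

Lemma subspace_preimages :
  subspace ip S0 -> subspace ip S -> subspace ip (preimages S0 P F S).
Proof.
move=> subS0 subS; split=> [A [/(subspace_bdd subS0)] //||a A B [S0A SFA] [S0B SFB]].
- by split=> [|i /linF[_ -> _ _]]; [exact: subspace0 subS0 | exact: subspace0 subS].
split=> [|i Pi]; first exact: (subspace_comb subS0).
by have [_ _ -> _] := linF Pi; apply: (subspace_comb subS); [apply: SFA | apply: SFB].
Qed.

Lemma norm_closed_preimages :
  norm_closed ip S0 -> norm_closed ip S -> norm_closed ip (preimages S0 P F S).
Proof.
move=> clS0 clS A bA appA; split.
  by apply: clS0 => // e /appA[B [[S0B _] leAB]]; exists B.
move=> i Pi; have [bF _ _ [c c_gt0 lipF]] := linF Pi.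
apply: (clS _ (bF _ bA)) => e e_gt0; have ec_gt0 := divr_gt0 e_gt0 c_gt0.
have [B [[_ SFB] leAB]] := appA _ ec_gt0; exists (F i B); split; first exact: SFB.
by rewrite -(divfK (lt0r_neq0 c_gt0) e) mulrC; apply: lipF.
Qed.

End Preimages.

Section Generated.
Variable G : opset H.
Hypothesis bG : forall B, G B -> bdd ip B.

Lemma closed_span_gen B : G B -> closed_span ip G B.
Proof. by move=> GB S _ _; apply. Qed.

Lemma closed_span_norm_closed : norm_closed ip (closed_span ip G).
Proof.
move=> A bA appA S subS clS GS; apply: (clS) => // e /appA[B [spanB leAB]].
by exists B; split=> //; apply: spanB.
Qed.

Lemma closed_span_subspace : subspace ip (closed_span ip G).
Proof.
split=> [A spanA||a A B spanA spanB S subS clS GS].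
- exact: (spanA _ subalgebra_bdd.1 norm_closed_bdd bG).
- by move=> S subS _ _; apply: subspace0.
by apply: (subspace_comb subS); [apply: spanA | apply: spanB].
Qed.

Lemma closed_alg_gen_gen B : G B -> closed_alg_gen ip G B.
Proof. by move=> GB S _ _; apply. Qed.

Lemma closed_alg_gen_norm_closed : norm_closed ip (closed_alg_gen ip G).
Proof.
move=> A bA appA S subS clS GS; apply: (clS) => // e /appA[B [algB leAB]].
by exists B; split=> //; apply: algB.
Qed.

Lemma closed_alg_gen_subalgebra : subalgebra ip (closed_alg_gen ip G).
Proof.
split; first split=> [A algA||a A B algA algB S subS clS GS].
- exact: (algA _ subalgebra_bdd norm_closed_bdd bG).
- by move=> S [subS _] _ _; apply: subspace0.
- by apply: (subspace_comb subS.1); [apply: algA | apply: algB].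
by move=> A B algA algB S subS clS GS; apply: subS.2; [apply: algA | apply: algB].
Qed.

Variables (I : Type) (P : I -> Prop) (F : I -> op H -> op H).
Hypothesis linF : forall i, P i -> lipschitz_linear (F i).

Lemma closed_span_stable :
  (forall i B, P i -> G B -> closed_span ip G (F i B)) ->
  forall i A, P i -> closed_span ip G A -> closed_span ip G (F i A).
Proof.
move=> FG i A Pi spanA.
suff [_] : preimages (bdd ip) P F (closed_span ip G) A by apply.
apply: spanA.
- exact: (subspace_preimages linF subalgebra_bdd.1 closed_span_subspace).
- exact: (norm_closed_preimages linF norm_closed_bdd closed_span_norm_closed).
- by move=> B GB; split=> [|j Pj]; [apply: bG | apply: FG].
Qed.

Lemma closed_alg_gen_preimages S0 S :
  let Q := preimages S0 P F S in
  subspace ip S0 -> norm_closed ip S0 -> subspace ip S -> norm_closed ip S ->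
  (forall A B, Q A -> Q B -> Q (op_comp A B)) -> (forall g, G g -> Q g) ->
  forall A, closed_alg_gen ip G A -> Q A.
Proof.
move=> Q subS0 clS0 subS clS QM GQ A; apply; last exact: GQ.
- by split=> //; apply: subspace_preimages.
- exact: norm_closed_preimages.
Qed.

End Generated.

Section Ideal.
Variables G G' : opset H.
Hypotheses (bG : forall g, G g -> bdd ip g)
  (G'_alg : forall B, G' B -> closed_alg_gen ip G B)
  (gen_mul : forall g B, G g -> G' B ->
     closed_span ip G' (op_comp g B) /\ closed_span ip G' (op_comp B g)).

Let bG' B : G' B -> bdd ip B.
Proof. by move/G'_alg; apply: (subspace_bdd (closed_alg_gen_subalgebra bG).1). Qed.

Let subK : subspace ip (closed_span ip G').
Proof. exact: closed_span_subspace bG'. Qed.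

Let clK : norm_closed ip (closed_span ip G').
Proof. exact: closed_span_norm_closed. Qed.

Lemma closed_span_mul_gen g A : G g -> closed_span ip G' A ->
  closed_span ip G' (op_comp g A) /\ closed_span ip G' (op_comp A g).
Proof.
move=> Gg spanA; split.
- apply: (closed_span_stable bG' (P := G) (F := fun h A => op_comp h A) _ _ Gg spanA).
    by move=> h /bG; apply: lipschitz_linear_compl.
  by move=> h B Gh /(gen_mul Gh)[].
- apply: (closed_span_stable bG' (P := G) (F := fun h A => op_comp A h) _ _ Gg spanA).
    by move=> h /bG; apply: lipschitz_linear_compr.
  by move=> h B Gh /(gen_mul Gh)[].
Qed.

Lemma closed_span_mull X A : closed_alg_gen ip G X -> closed_span ip G' A ->
  closed_span ip G' (op_comp X A).
Proof.
move=> algX; move: A.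
suff [_] : preimages (bdd ip) (closed_span ip G') (fun A X => op_comp X A) (closed_span ip G') X.
  by [].
apply: (closed_alg_gen_preimages _ subalgebra_bdd.1 norm_closed_bdd subK clK _ _ algX).
- by move=> A /(subspace_bdd subK); apply: lipschitz_linear_compr.
- move=> X1 X2 [bX1 KX1] [bX2 KX2].
  by split=> [|A KA]; [apply: bdd_comp | exact: (KX1 _ (KX2 A KA))].
- by move=> g Gg; split=> [|A KA]; [apply: bG | case: (closed_span_mul_gen Gg KA)].
Qed.

Lemma closed_span_mulr X A : closed_alg_gen ip G X -> closed_span ip G' A ->
  closed_span ip G' (op_comp A X).
Proof.
move=> algX; move: A.
suff [_] : preimages (bdd ip) (closed_span ip G') (fun A X => op_comp A X) (closed_span ip G') X.
  by [].
apply: (closed_alg_gen_preimages _ subalgebra_bdd.1 norm_closed_bdd subK clK _ _ algX).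
- by move=> A /(subspace_bdd subK); apply: lipschitz_linear_compl.
- move=> X1 X2 [bX1 KX1] [bX2 KX2].
  by split=> [|A KA]; [apply: bdd_comp | exact: (KX2 _ (KX1 A KA))].
- by move=> g Gg; split=> [|A KA]; [apply: bG | case: (closed_span_mul_gen Gg KA)].
Qed.

Lemma closed_span_ideal : ideal_of ip (closed_alg_gen ip G) (closed_span ip G').
Proof.
split=> // [A spanA|X A algX KA].
  exact: (spanA _ (closed_alg_gen_subalgebra bG).1 (closed_alg_gen_norm_closed (G := G)) G'_alg).
by split; [apply: closed_span_mull | apply: closed_span_mulr].
Qed.

End Ideal.

Section CommutatorIdeal.
Variables G J : opset H.
Hypotheses (bG : forall g, G g -> bdd ip g) (idJ : ideal_of ip (closed_alg_gen ip G) J)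
  (clJ : norm_closed ip J) (commG : forall g h, G g -> G h -> J (op_comm g h)).

Let subAlg : subspace ip (closed_alg_gen ip G).
Proof. exact: (closed_alg_gen_subalgebra bG).1. Qed.

Let clAlg : norm_closed ip (closed_alg_gen ip G).
Proof. exact: closed_alg_gen_norm_closed. Qed.

Let linAlg X : closed_alg_gen ip G X -> lin_op X.
Proof. by move/(subspace_bdd subAlg)/bdd_lin. Qed.

Let subJ : subspace ip J.
Proof. by case: idJ. Qed.

Let mulJ X A : closed_alg_gen ip G X -> J A -> J (op_comp X A) /\ J (op_comp A X).
Proof. by case: idJ => _ _; apply. Qed.

Lemma closed_alg_gen_comm_gen X h : closed_alg_gen ip G X -> G h -> J (op_comm X h).
Proof.
move=> algX; move: h.
suff [_] : preimages (closed_alg_gen ip G) G (fun h X => op_comm X h) J X by [].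
apply: (closed_alg_gen_preimages _ subAlg clAlg subJ clJ _ _ algX).
- by move=> h /bG; apply: lipschitz_linear_commr.
- move=> X1 X2 [alg1 J1] [alg2 J2]; split=> [|h Gh].
    exact: (closed_alg_gen_subalgebra bG).2.
  rewrite op_comm_compl; last exact: linAlg.
  apply: (subspace_add subJ); first exact: (mulJ alg1 (J2 h Gh)).1.
  exact: (mulJ alg2 (J1 h Gh)).2.
- by move=> g Gg; split=> [|h Gh]; [apply: closed_alg_gen_gen | apply: commG].
Qed.

Lemma closed_alg_gen_comm X Y :
  closed_alg_gen ip G X -> closed_alg_gen ip G Y -> J (op_comm X Y).
Proof.
move=> algX algY; move: X algX.
suff [_] : preimages (closed_alg_gen ip G) (closed_alg_gen ip G) op_comm J Y by [].
apply: (closed_alg_gen_preimages _ subAlg clAlg subJ clJ _ _ algY).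
- by move=> X /(subspace_bdd subAlg); apply: lipschitz_linear_comml.
- move=> Y1 Y2 [alg1 J1] [alg2 J2]; split=> [|X algX].
    exact: (closed_alg_gen_subalgebra bG).2.
  rewrite op_comm_compr; last exact: linAlg.
  apply: (subspace_add subJ); first exact: (mulJ alg2 (J1 X algX)).2.
  exact: (mulJ alg1 (J2 X algX)).1.
- move=> h Gh; split=> [|X algX]; first exact: closed_alg_gen_gen.
  exact: closed_alg_gen_comm_gen.
Qed.

End CommutatorIdeal.

Section LeftInverse.
Variables T Td : op H.
Hypotheses (bT : bdd ip T) (bTd : bdd ip Td) (TdK : cancel T Td).

Local Notation P := (op_sub op_id (op_comp T Td)).
Local Notation gen n m := (op_comp (op_comp (op_pow T n) P) (op_pow Td m)).
Local Notation Alg := (closed_alg_gen ip (fun B => B = T \/ B = Td)).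
Local Notation K := (closed_span ip (fun B => exists n m : nat, B = gen n m)).

Lemma P_comm : P = op_comm Td T.
Proof. by apply: funext => x; rewrite /op_comm /op_sub /op_comp /op_id TdK. Qed.

Lemma gen_compTd n m : op_comp (gen n m) Td = gen n m.+1.
Proof. by apply: funext => x; rewrite /op_comp /op_pow iterSr. Qed.

Lemma compTd_gen n m : op_comp Td (gen n m) = if n is k.+1 then gen k m else op0.
Proof.
apply: funext => x; case: n => [|k]; rewrite /op_comp /op_pow /= ?TdK //.
by rewrite /op_sub /op_id (lin_opB (bdd_lin bTd)) TdK subrr.
Qed.

Lemma gen_compT n m : op_comp (gen n m) T = if m is k.+1 then gen n k else op0.
Proof.
apply: funext => x; case: m => [|k]; rewrite /op_comp /op_pow /=.
  by rewrite /op_sub /op_id TdK subrr; exact: lin_op0 (bdd_lin (bdd_pow n bT)).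
by rewrite -iterS iterSr TdK.
Qed.

Lemma gen_mem_ideal (S J : opset H) : ideal_of ip S J -> S T -> S Td -> J P ->
  forall n m, J (gen n m).
Proof.
case=> _ _ mulJ ST STd JP; elim=> [|n IHn] m.
  elim: m => [//|m IHm]; rewrite -gen_compTd; exact: (mulJ _ _ STd IHm).2.
exact: (mulJ _ _ ST (IHn m)).1.
Qed.

Lemma bdd_T_Td B : B = T \/ B = Td -> bdd ip B.
Proof. by case=> ->. Qed.

Lemma Alg_T : Alg T.
Proof. by apply: closed_alg_gen_gen; left. Qed.

Lemma Alg_Td : Alg Td.
Proof. by apply: closed_alg_gen_gen; right. Qed.

Lemma gen_Alg n m : Alg (gen n m).
Proof.
have algAlg := closed_alg_gen_subalgebra bdd_T_Td; have [subAlg mulAlg] := algAlg.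
apply: (gen_mem_ideal (subalgebra_ideal algAlg) Alg_T Alg_Td).
by rewrite P_comm; apply: (subspace_sub subAlg); apply: mulAlg;
  [exact: Alg_Td | exact: Alg_T | exact: Alg_T | exact: Alg_Td].
Qed.

Lemma K_gen n m : K (gen n m).
Proof. by apply: closed_span_gen; exists n, m. Qed.

Lemma K_subspace : subspace ip K.
Proof.
apply: closed_span_subspace => _ [n [m ->]].
exact: (subspace_bdd (closed_alg_gen_subalgebra bdd_T_Td).1 (gen_Alg n m)).
Qed.

Lemma K_norm_closed : norm_closed ip K.
Proof. exact: closed_span_norm_closed. Qed.

Lemma K_ideal : ideal_of ip Alg K.
Proof.
apply: (closed_span_ideal bdd_T_Td) => [_ [n [m ->]]|_ _ [->|->] [n [m ->]]].
- exact: gen_Alg.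
- split; first exact: (K_gen n.+1 m).
  by rewrite gen_compT; case: m => [|m]; [apply: subspace0 K_subspace | apply: K_gen].
- split; last by rewrite gen_compTd; apply: K_gen.
  by rewrite compTd_gen; case: n => [|n]; [apply: subspace0 K_subspace | apply: K_gen].
Qed.

Lemma K_comm g h : g = T \/ g = Td -> h = T \/ h = Td -> K (op_comm g h).
Proof.
case=> -> [] ->; rewrite ?op_commxx; try exact: subspace0 K_subspace.
  by rewrite op_commN -P_comm; apply: (subspace_scale K_subspace); exact: (K_gen 0 0).
by rewrite -P_comm; exact: (K_gen 0 0).
Qed.

Lemma commutator_idealE A : K A <-> commutator_ideal ip Alg A.
Proof.
split=> [KA J idJ clJ commJ|CA].
  apply: KA => [||_ [n [m ->]]]; [by case: idJ | done |].
  apply: (gen_mem_ideal idJ Alg_T Alg_Td).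
  by rewrite P_comm; apply: commJ; [exact: Alg_Td | exact: Alg_T].
apply: CA; [exact: K_ideal | exact: K_norm_closed |].
exact: (closed_alg_gen_comm bdd_T_Td K_ideal K_norm_closed K_comm).
Qed.

End LeftInverse.

End Hilbert.

Theorem proposition2p19 (R : realType) (H : lmodType R[i]) (ip : H -> H -> R[i])
  (hH : is_hilbert ip) (T Ts Td : H -> H)
  (hTs : is_adjoint ip T Ts) (hTsb : bdd ip Ts)
  (hnat : natural ip T Ts) (hTd : moore_penrose ip T Ts Td) :
  let P := op_sub op_id (op_comp T Td) in
  forall A : H -> H,
    closed_span ip (fun B => exists n m : nat,
                      B = op_comp (op_comp (op_pow T n) P) (op_pow Td m)) A
    <-> commutator_ideal ip (closed_alg_gen ip (fun B => B = T \/ B = Td)) A.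
Proof.
move=> P A; have [[bT _] _] := hnat; have [B [bB BTsT _ eTd]] := hTd.
have bTd : bdd ip Td by rewrite eTd; exact: (bdd_comp hH bB hTsb).
have TdK : cancel T Td by move=> x; rewrite eTd; exact: (congr1 (fun f => f x) BTsT).
exact: (commutator_idealE hH bT bTd TdK A).
Qed.
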